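(* Let $\Phi,\Psi$ be join doctrines such that $\Phi$ is a sound join doctrine dual to $\Psi^{\mathrm{op}}$ and $\omega\in\Phi$. Then $(\Phi,\Psi)$ is one of the following four pairs, and each of these four pairs does satisfy these conditions: (i) $\Phi=$ directed posets, $\Psi=$ posets with finite cofinality; (ii) $\Phi=$ posets that are empty or directed, $\Psi=$ nonempty posets with finite cofinality; (iii) $\Phi=$ nonempty posets, $\Psi=$ posets which are empty or have a greatest element; (iv) $\Phi=$ all posets, $\Psi=$ posets with a greatest element.
   Context: A join doctrine is a class $\Phi$ of posets such that: (1) the one-element poset is in $\Phi$; (2) if a poset $P$ is the union of a set $\mathcal{S}$ of subposets each in $\Phi$, and $\mathcal{S}$ ordered by inclusion is in $\Phi$, then $P\in\Phi$; (3) if $f:P\to Q$ is monotone with cofinal image and $P\in\Phi$ then $Q\in\Phi$; (4) if $P\subseteq Q$ is a cofinal subposet and $Q\in\Phi$ then $P\in\Phi$. For a poset $X$, $\mathcal{L}(X)$ denotes the set of lower subsets of $X$ ordered by inclusion, and $\Phi(X)\subseteq\mathcal{L}(X)$ the lower subsets which, as subposets, belong to $\Phi$. $\omega$ is the natural numbers with their usual order. For join doctrines $\Phi,\Psi$, ''$\Psi^{\mathrm{op}}$-meets commute with $\Phi$-joins in $2$'' means: for all posets $X,Y$, all $\phi\in\Phi(Y)$, $\psi\in\Psi(X)$ and all monotone $F:X^{\mathrm{op}}\times Y\to 2=\{0<1\}$, $\bigwedge_{x\in\psi}\bigvee_{y\in\phi}F(x,y)=\bigvee_{y\in\phi}\bigwedge_{x\in\psi}F(x,y)$.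 $\Phi$ is a sound join doctrine dual to $\Psi^{\mathrm{op}}$ if $\Psi^{\mathrm{op}}$-meets commute with $\Phi$-joins in $2$ and, for every poset $X$, the smallest subset of $\mathcal{L}(X)$ containing $\Psi(X)$ and closed under unions of subfamilies $\mathcal{S}\subseteq\mathcal{L}(X)$ with $\mathcal{S}$ (ordered by inclusion) in $\Phi$ is all of $\mathcal{L}(X)$. *)

(* Posets are represented by a carrier type together with a
   relation; a "class of posets" is a predicate on such pairs. *)
From Stdlib Require Import List.

Definition IsPoset (T : Type) (le : T -> T -> Prop) : Prop :=
  (forall x, le x x) /\
  (forall x y z, le x y -> le y z -> le x z) /\
  (forall x y, le x y -> le y x -> x = y).

Definition PClass := forall T : Type, (T -> T -> Prop) -> Prop.

Definition sub_le {T : Type} (le : T -> T -> Prop) (A : T -> Prop)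
  : {x : T | A x} -> {x : T | A x} -> Prop :=
  fun a b => le (proj1_sig a) (proj1_sig b).

Definition incl_le {T : Type} (S : (T -> Prop) -> Prop)
  : {A : T -> Prop | S A} -> {A : T -> Prop | S A} -> Prop :=
  fun A B => forall x, proj1_sig A x -> proj1_sig B x.

Definition bigunion {T : Type} (S : (T -> Prop) -> Prop) : T -> Prop :=
  fun x => exists A, S A /\ A x.

Definition monotone {P Q : Type} (leP : P -> P -> Prop) (leQ : Q -> Q -> Prop)
  (f : P -> Q) : Prop := forall x y, leP x y -> leQ (f x) (f y).

Definition cofinal_image {P Q : Type} (leQ : Q -> Q -> Prop) (f : P -> Q) : Prop :=
  forall q, exists p, leQ q (f p).

Definition cofinal_subset {T : Type} (le : T -> T -> Prop) (A : T -> Prop) : Prop :=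
  forall x, exists y, A y /\ le x y.

Definition JoinDoctrine (Phi : PClass) : Prop :=
  (forall T le, Phi T le -> IsPoset T le) /\
  Phi unit (fun _ _ => True) /\
  (forall (T : Type) (le : T -> T -> Prop), IsPoset T le ->
     forall S : (T -> Prop) -> Prop,
       (forall A, S A -> Phi {x : T | A x} (sub_le le A)) ->
       Phi {A : T -> Prop | S A} (incl_le S) ->
       (forall x, bigunion S x) ->
       Phi T le) /\
  (forall (P Q : Type) (leP : P -> P -> Prop) (leQ : Q -> Q -> Prop) (f : P -> Q),
     IsPoset P leP -> IsPoset Q leQ ->
     monotone leP leQ f -> cofinal_image leQ f ->
     Phi P leP -> Phi Q leQ) /\
  (forall (Q : Type) (leQ : Q -> Q -> Prop) (A : Q -> Prop),
     IsPoset Q leQ -> cofinal_subset leQ A ->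
     Phi Q leQ -> Phi {x : Q | A x} (sub_le leQ A)).

Definition lower {T : Type} (le : T -> T -> Prop) (A : T -> Prop) : Prop :=
  forall x y, le x y -> A y -> A x.

Definition InClassOf (Phi : PClass) {X : Type} (le : X -> X -> Prop) (A : X -> Prop) : Prop :=
  lower le A /\ Phi {x : X | A x} (sub_le le A).

(* Psi^op-meets commute with Phi-joins in 2 = {0 < 1} (bool, false < true). *)
Definition MeetsCommuteJoins (Phi Psi : PClass) : Prop :=
  forall (X Y : Type) (leX : X -> X -> Prop) (leY : Y -> Y -> Prop),
    IsPoset X leX -> IsPoset Y leY ->
    forall (phi : Y -> Prop) (psi : X -> Prop),
      InClassOf Phi leY phi -> InClassOf Psi leX psi ->
      forall F : X -> Y -> bool,
        (forall x x' y y', leX x' x -> leY y y' -> F x y = true -> F x' y' = true) ->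
        ((forall x, psi x -> exists y, phi y /\ F x y = true) <->
         (exists y, phi y /\ forall x, psi x -> F x y = true)).

(* L belongs to the smallest subset of L(X) containing Psi(X) and closed under
   unions of subfamilies S of L(X) with S (ordered by inclusion) in Phi. *)
Definition Generated (Phi Psi : PClass) {X : Type} (le : X -> X -> Prop) (L : X -> Prop) : Prop :=
  forall C : (X -> Prop) -> Prop,
    (forall A, InClassOf Psi le A -> C A) ->
    (forall S : (X -> Prop) -> Prop,
       (forall A, S A -> lower le A /\ C A) ->
       Phi {A : X -> Prop | S A} (incl_le S) ->
       C (bigunion S)) ->
    C L.

Definition SoundDual (Phi Psi : PClass) : Prop :=
  MeetsCommuteJoins Phi Psi /\
  (forall (X : Type) (le : X -> X -> Prop), IsPoset X le ->
     forall L, lower le L -> Generated Phi Psi le L).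

Definition Nonempty (T : Type) : Prop := exists x : T, True.
Definition Directed (T : Type) (le : T -> T -> Prop) : Prop :=
  Nonempty T /\ forall x y, exists z, le x z /\ le y z.
Definition FiniteCofinality (T : Type) (le : T -> T -> Prop) : Prop :=
  exists s : list T, forall x, exists y, In y s /\ le x y.
Definition HasGreatest (T : Type) (le : T -> T -> Prop) : Prop :=
  exists g, forall x, le x g.

Definition C_directed : PClass := fun T le => IsPoset T le /\ Directed T le.
Definition C_fincof : PClass := fun T le => IsPoset T le /\ FiniteCofinality T le.
Definition C_empty_or_directed : PClass :=
  fun T le => IsPoset T le /\ (~ Nonempty T \/ Directed T le).
Definition C_nonempty_fincof : PClass :=
  fun T le => IsPoset T le /\ Nonempty T /\ FiniteCofinality T le.
Definition C_nonempty : PClass := fun T le => IsPoset T le /\ Nonempty T.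
Definition C_empty_or_greatest : PClass :=
  fun T le => IsPoset T le /\ (~ Nonempty T \/ HasGreatest T le).
Definition C_all : PClass := fun T le => IsPoset T le.
Definition C_greatest : PClass := fun T le => IsPoset T le /\ HasGreatest T le.

Definition SameClass (Phi Phi' : PClass) : Prop := forall T le, Phi T le <-> Phi' T le.

From Stdlib Require Import List Bool Classical ClassicalEpsilon ProofIrrelevance
  FunctionalExtensionality PropExtensionality Lia.
Import ListNotations.

(* The four pairs are checked directly: each class is closed under the doctrine
   operations, the commutation law is a finite induction (directed against finite
   cofinality) or an evaluation at a greatest element, and every lower set is a
   directed union of finitely generated lower sets, or a union of principal ones.

   Conversely, commuting with the discrete poset 2 shows that if 2 is in Phi then
   any two elements of a Psi-poset have an upper bound, and symmetrically.
   Generating the full subset of 2 (resp. of the empty poset) shows that 2 (resp.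
   the empty poset) lies in Phi or in Psi; by commutation the empty poset is not
   in both.
   If 2 is in Phi, discrete Psi-posets are subsingletons, so every nonempty poset is
   a Phi-union of points, and commuting with the order relation itself gives every
   nonempty Psi-poset a greatest element.  If 2 is in Psi, omega in Phi forces
   discrete Psi-posets to be finite; closing finite sets under chosen upper bounds
   gives countable directed sets with a cofinal chain, so every directed poset is
   in Phi, and commuting with the directed poset of finitely generated lower sets
   gives every Psi-poset finite cofinality. *)

Definition truth (P : Prop) : bool := if excluded_middle_informative P then true else false.

Lemma truth_spec (P : Prop) : truth P = true <-> P.
Proof. unfold truth; destruct (excluded_middle_informative P); split; congruence || tauto. Qed.

Lemma pred_ext {T : Type} (A B : T -> Prop) : (forall x, A x <-> B x) -> A = B.
Proof.
  intro AB; apply functional_extensionality; intro x.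
  apply propositional_extensionality, AB.
Qed.

Lemma sig_ext {T : Type} {A : T -> Prop} (a b : {x | A x}) :
  proj1_sig a = proj1_sig b -> a = b.
Proof. destruct a, b; simpl; intros ->; f_equal; apply proof_irrelevance. Qed.

Lemma sameclass_eq (Phi Phi' : PClass) : SameClass Phi Phi' -> Phi = Phi'.
Proof.
  intro E; apply functional_extensionality_dep; intro T.
  apply functional_extensionality; intro le; apply propositional_extensionality, E.
Qed.

Lemma sub_poset {T : Type} (le : T -> T -> Prop) (A : T -> Prop) :
  IsPoset T le -> IsPoset {x | A x} (sub_le le A).
Proof.
  intros (refl & trans & antisym); unfold sub_le; split; [|split]; intros.
  - apply refl.
  - eapply trans; eauto.
  - apply sig_ext, antisym; auto.
Qed.

Lemma incl_poset {T : Type} (S : (T -> Prop) -> Prop) : IsPoset {A | S A} (incl_le S).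
Proof.
  unfold incl_le; split; [|split]; auto.
  intros A B AB BA; apply sig_ext, pred_ext; split; auto.
Qed.

Lemma eq_poset (T : Type) : IsPoset T (@eq T).
Proof. split; [|split]; intros; subst; auto. Qed.

Lemma nat_poset : IsPoset nat le.
Proof. split; [|split]; intros; lia. Qed.

Lemma unit_poset : IsPoset unit (fun _ _ => True).
Proof. split; [|split]; auto. intros [] [] _ _; reflexivity. Qed.

Lemma empty_set_empty : ~ Nonempty Empty_set.
Proof. intros [[] _]. Qed.

Definition down {X : Type} (le : X -> X -> Prop) (l : list X) : X -> Prop :=
  fun x => exists y, In y l /\ le x y.

Lemma down_lower {X : Type} (le : X -> X -> Prop) (l : list X) :
  IsPoset X le -> lower le (down le l).
Proof. intros (_ & trans & _) x y xy [z [zl yz]]; exists z; split; eauto. Qed.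

Lemma down_in {X : Type} (le : X -> X -> Prop) (l : list X) x :
  IsPoset X le -> In x l -> down le l x.
Proof. intros HX xl; exists x; split; [exact xl | apply HX]. Qed.

Lemma down_single_greatest {X : Type} (le : X -> X -> Prop) (a : X) :
  IsPoset X le -> HasGreatest {x | down le [a] x} (sub_le le (down le [a])).
Proof.
  intro HX; exists (exist _ a (down_in le [a] a HX (or_introl eq_refl))).
  intros [x [y [[<-|[]] xy]]]; exact xy.
Qed.

(** * Join doctrines *)

Section JoinDoctrineFacts.

Variable Phi : PClass.
Hypothesis JPhi : JoinDoctrine Phi.

Lemma jd_poset T (le : T -> T -> Prop) : Phi T le -> IsPoset T le.
Proof. apply JPhi. Qed.

Lemma jd_cofinal_image P Q (leP : P -> P -> Prop) (leQ : Q -> Q -> Prop) (f : P -> Q) :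
  IsPoset Q leQ -> monotone leP leQ f -> cofinal_image leQ f -> Phi P leP -> Phi Q leQ.
Proof.
  intros HQ mono cof HP; pose proof JPhi as (_ & _ & _ & Jmap & _).
  exact (Jmap P Q leP leQ f (jd_poset _ _ HP) HQ mono cof HP).
Qed.

Lemma jd_cofinal_sub Q (leQ : Q -> Q -> Prop) (A : Q -> Prop) :
  cofinal_subset leQ A -> Phi Q leQ -> Phi {x | A x} (sub_le leQ A).
Proof.
  intros cof HQ; pose proof JPhi as (_ & _ & _ & _ & Jsub).
  exact (Jsub Q leQ A (jd_poset _ _ HQ) cof HQ).
Qed.

Lemma jd_greatest T (le : T -> T -> Prop) : IsPoset T le -> HasGreatest T le -> Phi T le.
Proof.
  intros HT [g Hg]; apply (jd_cofinal_image unit T (fun _ _ => True) le (fun _ => g)); auto.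
  - intros x y _; apply HT.
  - intro q; exists tt; auto.
  - apply JPhi.
Qed.

Lemma jd_total_sub T (le : T -> T -> Prop) :
  Phi T le -> Phi {x : T | True} (sub_le le (fun _ => True)).
Proof.
  intro HT; apply jd_cofinal_sub; auto.
  intro x; exists x; split; [exact I | apply (jd_poset _ _ HT)].
Qed.

Lemma jd_of_total_sub T (le : T -> T -> Prop) (A : T -> Prop) :
  IsPoset T le -> (forall x, A x) -> Phi {x | A x} (sub_le le A) -> Phi T le.
Proof.
  intros HT total; apply (jd_cofinal_image _ _ _ _ (@proj1_sig T A)); auto.
  - intros x y xy; exact xy.
  - intro q; exists (exist _ q (total q)); apply HT.
Qed.

Lemma jd_empty_iff T (le : T -> T -> Prop) :
  IsPoset T le -> ~ Nonempty T -> Phi T le <-> Phi Empty_set eq.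
Proof.
  intros HT empty; split; intro H.
  - apply (jd_cofinal_image T Empty_set le eq (fun x => False_rect _ (empty (ex_intro _ x I)))).
    + apply eq_poset.
    + intro x; destruct (empty (ex_intro _ x I)).
    + intros [].
    + exact H.
  - apply (jd_cofinal_image Empty_set T eq le (fun x => match x with end)); auto.
    + intros [].
    + intro q; destruct (empty (ex_intro _ q I)).
Qed.

Lemma jd_sub_ext T (le : T -> T -> Prop) (A B : T -> Prop) :
  (forall x, A x <-> B x) -> Phi {x | A x} (sub_le le A) -> Phi {x | B x} (sub_le le B).
Proof. intro AB; rewrite (pred_ext A B AB); auto. Qed.

Lemma jd_restrict T (le : T -> T -> Prop) (V A : T -> Prop) :
  IsPoset T le -> (forall x, A x -> V x) -> Phi {x | A x} (sub_le le A) ->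
  Phi {t : {x | V x} | A (proj1_sig t)} (sub_le (sub_le le V) (fun t => A (proj1_sig t))).
Proof.
  intros HT AV; apply (jd_cofinal_image _ _ _ _
    (fun a => exist (fun t => A (proj1_sig t)) (exist V _ (AV _ (proj2_sig a))) (proj2_sig a))).
  - apply sub_poset, sub_poset, HT.
  - intros a b ab; exact ab.
  - intros [[x Vx] Ax]; exists (exist _ x Ax); apply HT.
Qed.

Lemma jd_indexed_union I (leI : I -> I -> Prop) T (le : T -> T -> Prop) (G : I -> T -> Prop) :
  IsPoset T le -> Phi I leI -> (forall i j, leI i j -> forall x, G i x -> G j x) ->
  (forall i, Phi {x | G i x} (sub_le le (G i))) ->
  Phi {x | exists i, G i x} (sub_le le (fun x => exists i, G i x)).
Proof.
  intros HT HI mono HG.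
  set (V := fun x => exists i, G i x).
  set (S := fun B : {x | V x} -> Prop => exists i, B = fun t => G i (proj1_sig t)).
  pose proof JPhi as (_ & _ & Junion & _ & _).
  apply (Junion _ _ (sub_poset le V HT) S).
  - intros B [i ->]; apply jd_restrict; auto.
    intros x Gx; exists i; exact Gx.
  - apply (jd_cofinal_image _ _ leI _
      (fun i => exist S (fun t => G i (proj1_sig t)) (ex_intro _ i eq_refl))); auto.
    + apply incl_poset.
    + intros i j ij t; apply mono, ij.
    + intros [B [i ->]]; exists i; intros t Bt; exact Bt.
  - intros [x [i Gx]]; exists (fun t => G i (proj1_sig t)); split; [exists i|]; auto.
Qed.

Lemma jd_nonempty_members T (S : (T -> Prop) -> Prop) :
  Phi {A | S A} (incl_le S) -> (exists A, S A /\ exists x, A x) ->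
  Phi {s : {A | S A} | exists x, proj1_sig s x}
      (sub_le (incl_le S) (fun s => exists x, proj1_sig s x)).
Proof.
  intros HS [A0 [SA0 [x0 A0x0]]]; apply jd_cofinal_sub; auto.
  intros [A SA]; destruct (classic (exists x, A x)) as [nonempty | empty].
  - exists (exist _ A SA); split; [exact nonempty | intros x; auto].
  - exists (exist _ A0 SA0); split; [exists x0; exact A0x0|].
    intros x Ax; destruct (empty (ex_intro _ x Ax)).
Qed.

Lemma jd_union_over_nonempty_members T (le : T -> T -> Prop) (S : (T -> Prop) -> Prop)
  (G : (T -> Prop) -> T -> Prop) :
  IsPoset T le -> Phi {A | S A} (incl_le S) -> (exists A, S A /\ exists x, A x) ->
  (forall A B, (forall x, A x -> B x) -> forall x, G A x -> G B x) ->
  (forall A, S A -> (exists x, A x) -> Phi {x | G A x} (sub_le le (G A))) ->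
  Phi {x | exists A, S A /\ (exists z, A z) /\ G A x}
      (sub_le le (fun x => exists A, S A /\ (exists z, A z) /\ G A x)).
Proof.
  intros HT HS ne mono HG.
  apply (jd_sub_ext _ _ (fun x => exists s : {s : {A | S A} | exists z, proj1_sig s z},
                                     G (proj1_sig (proj1_sig s)) x)).
  - intro x; split.
    + intros [[[A SA] neA] GAx]; exists A; auto.
    + intros [A [SA [neA GAx]]]; exists (exist _ (exist _ A SA) neA); exact GAx.
  - apply (jd_indexed_union _ (sub_le (incl_le S) _)); auto using jd_nonempty_members.
    + intros s t st; apply mono, st.
    + intros [[A SA] neA]; apply HG; auto.
Qed.

Lemma jd_binary_union T (le : T -> T -> Prop) (A B : T -> Prop) :
  Phi bool eq -> IsPoset T le ->
  Phi {x | A x} (sub_le le A) -> Phi {x | B x} (sub_le le B) ->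
  Phi {x | A x \/ B x} (sub_le le (fun x => A x \/ B x)).
Proof.
  intros Htwo HT HA HB.
  apply (jd_sub_ext _ _ (fun x => exists b : bool, if b then A x else B x)).
  { intro x; split; [intros [[|] H]; auto | intros [H|H]; [exists true | exists false]; auto]. }
  apply (jd_indexed_union bool eq T le (fun b x => if b then A x else B x)); auto.
  - intros i j <-; auto.
  - intros [|]; auto.
Qed.

Lemma jd_principal T (le : T -> T -> Prop) (a : T) :
  IsPoset T le -> Phi {x | down le [a] x} (sub_le le (down le [a])).
Proof.
  intro HT; apply jd_greatest; [apply sub_poset, HT | apply down_single_greatest, HT].
Qed.

Lemma jd_down_list T (le : T -> T -> Prop) :
  Phi bool eq -> IsPoset T le ->
  forall a l, Phi {x | down le (a :: l) x} (sub_le le (down le (a :: l))).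
Proof.
  intros Htwo HT a l; revert a; induction l as [|b l IH]; intro a.
  - apply jd_principal, HT.
  - apply (jd_sub_ext _ _ (fun x => down le [a] x \/ down le (b :: l) x)).
    + intro x; split.
      * intros [[y [[<-|[]] xy]] | [y [yl xy]]]; [exists a | exists y]; simpl; auto.
      * intros [y [[<-|yl] xy]]; [left; exists a | right; exists y]; simpl; auto.
    + apply jd_binary_union; auto using jd_principal.
Qed.

Lemma jd_nonempty_fincof_of_two T (le : T -> T -> Prop) :
  Phi bool eq -> IsPoset T le -> Nonempty T -> FiniteCofinality T le -> Phi T le.
Proof.
  intros Htwo HT [x0 _] [[|a l] cover].
  - destruct (cover x0) as [y [[] _]].
  - apply (jd_of_total_sub _ _ (down le (a :: l)) HT cover).
    apply jd_down_list; auto.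
Qed.

End JoinDoctrineFacts.

Lemma sameclass_of_nonempty (Phi C : PClass) :
  JoinDoctrine Phi -> JoinDoctrine C ->
  (forall T (le : T -> T -> Prop), Nonempty T -> Phi T le <-> C T le) ->
  (Phi Empty_set eq <-> C Empty_set eq) -> SameClass Phi C.
Proof.
  intros JPhi JC nonempty empty T le; destruct (classic (Nonempty T)) as [ne | e]; auto.
  split; intro H.
  - pose proof (jd_poset _ JPhi _ _ H) as HT.
    apply (jd_empty_iff C JC _ _ HT e), empty, (jd_empty_iff Phi JPhi _ _ HT e), H.
  - pose proof (jd_poset _ JC _ _ H) as HT.
    apply (jd_empty_iff Phi JPhi _ _ HT e), empty, (jd_empty_iff C JC _ _ HT e), H.
Qed.

(** * The four pairs *)

Lemma nonempty_image P Q (f : P -> Q) : Nonempty P -> Nonempty Q.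
Proof. intros [x _]; exists (f x); auto. Qed.

Lemma empty_image P Q (leQ : Q -> Q -> Prop) (f : P -> Q) :
  cofinal_image leQ f -> ~ Nonempty P -> ~ Nonempty Q.
Proof. intros cof empty [q _]; destruct (cof q) as [p _]; apply empty; exists p; auto. Qed.

Lemma nonempty_sub Q (leQ : Q -> Q -> Prop) (A : Q -> Prop) :
  cofinal_subset leQ A -> Nonempty Q -> Nonempty {x | A x}.
Proof. intros cof [q _]; destruct (cof q) as [y [Ay _]]; exists (exist _ y Ay); auto. Qed.

Lemma empty_sub Q (A : Q -> Prop) : ~ Nonempty Q -> ~ Nonempty {x | A x}.
Proof. intros empty [[x _] _]; apply empty; exists x; auto. Qed.

Lemma nonempty_union T (S : (T -> Prop) -> Prop) :
  Nonempty {A | S A} -> (forall A, S A -> Nonempty {x | A x}) -> Nonempty T.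
Proof. intros [[A SA] _] HS; destruct (HS A SA) as [[x _] _]; exists x; auto. Qed.

Lemma empty_union T (S : (T -> Prop) -> Prop) :
  ~ Nonempty {A | S A} -> (forall x, bigunion S x) -> ~ Nonempty T.
Proof.
  intros empty cover [x _]; destruct (cover x) as [A [SA _]].
  apply empty; exists (exist _ A SA); auto.
Qed.

Lemma directed_image P Q (leP : P -> P -> Prop) (leQ : Q -> Q -> Prop) (f : P -> Q) :
  IsPoset Q leQ -> monotone leP leQ f -> cofinal_image leQ f ->
  Directed P leP -> Directed Q leQ.
Proof.
  intros (_ & trans & _) mono cof [ne dir]; split; [exact (nonempty_image _ _ f ne)|].
  intros x y; destruct (cof x) as [p1 H1], (cof y) as [p2 H2].
  destruct (dir p1 p2) as [p3 [H13 H23]]; exists (f p3); split; eauto.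
Qed.

Lemma directed_sub Q (leQ : Q -> Q -> Prop) (A : Q -> Prop) :
  IsPoset Q leQ -> cofinal_subset leQ A -> Directed Q leQ -> Directed {x | A x} (sub_le leQ A).
Proof.
  intros (_ & trans & _) cof [ne dir]; split; [exact (nonempty_sub _ _ _ cof ne)|].
  intros [x Ax] [y Ay]; destruct (dir x y) as [z [xz yz]], (cof z) as [w [Aw zw]].
  exists (exist _ w Aw); unfold sub_le; simpl; split; eauto.
Qed.

Lemma directed_union T (le : T -> T -> Prop) (S : (T -> Prop) -> Prop) :
  Directed {A | S A} (incl_le S) ->
  (forall A, S A -> ~ Nonempty {x | A x} \/ Directed {x | A x} (sub_le le A)) ->
  (forall x, bigunion S x) -> Nonempty T -> Directed T le.
Proof.
  intros [_ dirS] HS cover ne; split; [exact ne|]; intros x y.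
  destruct (cover x) as [A [SA Ax]], (cover y) as [B [SB By]].
  destruct (dirS (exist _ A SA) (exist _ B SB)) as [[C SC] [AC BC]].
  destruct (HS C SC) as [empty | [_ dirC]].
  - destruct empty; exists (exist _ x (AC x Ax)); auto.
  - destruct (dirC (exist _ x (AC x Ax)) (exist _ y (BC y By))) as [[z Cz] [xz yz]].
    exists z; split; auto.
Qed.

Lemma fincof_image P Q (leP : P -> P -> Prop) (leQ : Q -> Q -> Prop) (f : P -> Q) :
  IsPoset Q leQ -> monotone leP leQ f -> cofinal_image leQ f ->
  FiniteCofinality P leP -> FiniteCofinality Q leQ.
Proof.
  intros (_ & trans & _) mono cof [l Hl]; exists (map f l); intro q.
  destruct (cof q) as [p qp], (Hl p) as [y [yl py]].
  exists (f y); split; [apply in_map, yl | eauto].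
Qed.

Lemma fincof_sub Q (leQ : Q -> Q -> Prop) (A : Q -> Prop) :
  IsPoset Q leQ -> cofinal_subset leQ A ->
  FiniteCofinality Q leQ -> FiniteCofinality {x | A x} (sub_le leQ A).
Proof.
  intros (_ & trans & _) cof [l Hl].
  assert (lift : forall l : list Q, exists L : list {x | A x},
    forall y, In y l -> exists w, In w L /\ leQ y (proj1_sig w)).
  { induction l0 as [|y l' [L HL]]; [exists []; intros y []|].
    destruct (cof y) as [w [Aw yw]]; exists (exist _ w Aw :: L).
    intros z [<-|zl]; [exists (exist _ w Aw); simpl; auto|].
    destruct (HL z zl) as [w' [H1 H2]]; exists w'; simpl; auto. }
  destruct (lift l) as [L HL]; exists L; intros [x Ax].
  destruct (Hl x) as [y [yl xy]], (HL y yl) as [w [wL yw]].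
  exists w; split; [exact wL | unfold sub_le; simpl; eauto].
Qed.

Lemma fincof_union T (le : T -> T -> Prop) (S : (T -> Prop) -> Prop) :
  IsPoset T le -> FiniteCofinality {A | S A} (incl_le S) ->
  (forall A, S A -> FiniteCofinality {x | A x} (sub_le le A)) ->
  (forall x, bigunion S x) -> FiniteCofinality T le.
Proof.
  intros HT [ls Hls] HS cover.
  assert (lift : forall ls : list {A | S A}, exists L : list T,
    forall s, In s ls -> forall x, proj1_sig s x -> exists y, In y L /\ le x y).
  { induction ls0 as [|[A SA] ls' [L' HL']]; [exists []; intros s []|].
    destruct (HS A SA) as [m Hm]; exists (map (@proj1_sig _ _) m ++ L').
    intros s [<-|sls] x sx.
    - destruct (Hm (exist _ x sx)) as [y [ym xy]]; exists (proj1_sig y).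
      split; [apply in_or_app; left; apply in_map, ym | exact xy].
    - destruct (HL' s sls x sx) as [y [yL xy]].
      exists y; split; [apply in_or_app; right|]; auto. }
  destruct (lift ls) as [L HL]; exists L; intro x.
  destruct (cover x) as [A [SA Ax]], (Hls (exist _ A SA)) as [s [sls As]].
  exact (HL s sls x (As x Ax)).
Qed.

Lemma greatest_image P Q (leP : P -> P -> Prop) (leQ : Q -> Q -> Prop) (f : P -> Q) :
  IsPoset Q leQ -> monotone leP leQ f -> cofinal_image leQ f ->
  HasGreatest P leP -> HasGreatest Q leQ.
Proof.
  intros (_ & trans & _) mono cof [g Hg]; exists (f g); intro q.
  destruct (cof q) as [p qp]; eauto.
Qed.

Lemma greatest_sub Q (leQ : Q -> Q -> Prop) (A : Q -> Prop) :
  IsPoset Q leQ -> cofinal_subset leQ A ->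
  HasGreatest Q leQ -> HasGreatest {x | A x} (sub_le leQ A).
Proof.
  intros (_ & trans & _) cof [g Hg]; destruct (cof g) as [w [Aw gw]].
  exists (exist _ w Aw); intros [x Ax]; unfold sub_le; simpl; eauto.
Qed.

Lemma greatest_union T (le : T -> T -> Prop) (S : (T -> Prop) -> Prop) :
  HasGreatest {A | S A} (incl_le S) ->
  (forall A, S A -> ~ Nonempty {x | A x} \/ HasGreatest {x | A x} (sub_le le A)) ->
  (forall x, bigunion S x) -> ~ Nonempty T \/ HasGreatest T le.
Proof.
  intros [[G SG] top] HS cover; unfold incl_le in top; simpl in top.
  assert (inG : forall x, G x) by
    (intro x; destruct (cover x) as [A [SA Ax]]; exact (top (exist _ A SA) x Ax)).
  destruct (HS G SG) as [empty | [[g Gg] Hg]].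
  - left; intros [x _]; apply empty; exists (exist _ x (inG x)); auto.
  - right; exists g; intro x; exact (Hg (exist _ x (inG x))).
Qed.

Lemma jd_of_property (Q : PClass) :
  Q unit (fun _ _ => True) ->
  (forall T (le : T -> T -> Prop) S, IsPoset T le ->
     (forall A, S A -> Q {x | A x} (sub_le le A)) -> Q {A | S A} (incl_le S) ->
     (forall x, bigunion S x) -> Q T le) ->
  (forall P R (leP : P -> P -> Prop) (leR : R -> R -> Prop) f, IsPoset R leR ->
     monotone leP leR f -> cofinal_image leR f -> Q P leP -> Q R leR) ->
  (forall R (leR : R -> R -> Prop) A, IsPoset R leR -> cofinal_subset leR A ->
     Q R leR -> Q {x | A x} (sub_le leR A)) ->
  JoinDoctrine (fun T le => IsPoset T le /\ Q T le).
Proof.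
  intros Qunit Qunion Qimage Qsub; split; [|split; [|split; [|split]]].
  - tauto.
  - split; [apply unit_poset | exact Qunit].
  - intros T le HT S HS [_ QS] cover; split; [exact HT|].
    apply (Qunion T le S); auto; intros A SA; apply HS, SA.
  - intros P R leP leR f _ HR mono cof [_ QP]; split; eauto.
  - intros R leR A HR cof [_ QR]; split; [apply sub_poset|]; auto.
Qed.

Lemma jd_C_all : JoinDoctrine C_all.
Proof.
  split; [|split; [|split; [|split]]]; unfold C_all; auto.
  - apply unit_poset.
  - intros; apply sub_poset; auto.
Qed.

Lemma jd_C_nonempty : JoinDoctrine C_nonempty.
Proof.
  apply jd_of_property.
  - exists tt; auto.
  - intros T le S _ HS ne _; exact (nonempty_union T S ne HS).
  - intros P R leP leR f _ _ _; exact (nonempty_image P R f).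
  - intros R leR A _; apply nonempty_sub.
Qed.

Lemma jd_C_empty_or_directed : JoinDoctrine C_empty_or_directed.
Proof.
  apply jd_of_property.
  - right; split; [exists tt; auto | intros; exists tt; auto].
  - intros T le S _ HS [empty | dir] cover.
    + left; exact (empty_union T S empty cover).
    + destruct (classic (Nonempty T)) as [ne | empty]; [right | left; exact empty].
      exact (directed_union T le S dir HS cover ne).
  - intros P R leP leR f HR mono cof [empty | dir].
    + left; exact (empty_image P R leR f cof empty).
    + right; exact (directed_image P R leP leR f HR mono cof dir).
  - intros R leR A HR cof [empty | dir].
    + left; exact (empty_sub R A empty).
    + right; exact (directed_sub R leR A HR cof dir).
Qed.

Lemma jd_C_fincof : JoinDoctrine C_fincof.
Proof.
  apply jd_of_property.
  - exists [tt]; intros []; exists tt; simpl; auto.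
  - intros T le S HT HS HSf cover; exact (fincof_union T le S HT HSf HS cover).
  - apply fincof_image.
  - apply fincof_sub.
Qed.

Lemma jd_C_empty_or_greatest : JoinDoctrine C_empty_or_greatest.
Proof.
  apply jd_of_property.
  - right; exists tt; auto.
  - intros T le S _ HS [empty | top] cover.
    + left; exact (empty_union T S empty cover).
    + exact (greatest_union T le S top HS cover).
  - intros P R leP leR f HR mono cof [empty | top].
    + left; exact (empty_image P R leR f cof empty).
    + right; exact (greatest_image P R leP leR f HR mono cof top).
  - intros R leR A HR cof [empty | top].
    + left; exact (empty_sub R A empty).
    + right; exact (greatest_sub R leR A HR cof top).
Qed.

Lemma jd_inter (Phi1 Phi2 : PClass) :
  JoinDoctrine Phi1 -> JoinDoctrine Phi2 -> JoinDoctrine (fun T le => Phi1 T le /\ Phi2 T le).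
Proof.
  intros (J0 & J1 & J2 & J3 & J4) (K0 & K1 & K2 & K3 & K4);
    split; [|split; [|split; [|split]]].
  - intros T le [H _]; eauto.
  - auto.
  - intros T le HT S HS [H1 H2] cover; split;
      [apply (J2 T le HT S) | apply (K2 T le HT S)]; auto; intros A SA; apply HS, SA.
  - intros P Q leP leQ f HP HQ mono cof [H1 H2]; split; eauto.
  - intros Q leQ A HQ cof [H1 H2]; split; auto.
Qed.

Lemma jd_sameclass (Phi Phi' : PClass) :
  SameClass Phi Phi' -> JoinDoctrine Phi -> JoinDoctrine Phi'.
Proof. intro E; rewrite (sameclass_eq _ _ E); auto. Qed.

Lemma jd_C_directed : JoinDoctrine C_directed.
Proof.
  apply (jd_sameclass (fun T le => C_nonempty T le /\ C_empty_or_directed T le)).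
  2: exact (jd_inter _ _ jd_C_nonempty jd_C_empty_or_directed).
  unfold C_directed, C_nonempty, C_empty_or_directed, Directed; intros T le; tauto.
Qed.

Lemma jd_C_nonempty_fincof : JoinDoctrine C_nonempty_fincof.
Proof.
  apply (jd_sameclass (fun T le => C_nonempty T le /\ C_fincof T le)).
  2: exact (jd_inter _ _ jd_C_nonempty jd_C_fincof).
  unfold C_nonempty_fincof, C_nonempty, C_fincof; intros T le; tauto.
Qed.

Lemma jd_C_greatest : JoinDoctrine C_greatest.
Proof.
  apply (jd_sameclass (fun T le => C_nonempty T le /\ C_empty_or_greatest T le)).
  2: exact (jd_inter _ _ jd_C_nonempty jd_C_empty_or_greatest).
  unfold C_greatest, C_nonempty, C_empty_or_greatest; intros T le; split; [tauto|].
  intros [HT [g top]]; split; split; auto; [exists g | right; exists g]; auto.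
Qed.

Definition op_monotone {X Y : Type} (leX : X -> X -> Prop) (leY : Y -> Y -> Prop)
  (R : X -> Y -> Prop) : Prop :=
  forall x x' y y', leX x' x -> leY y y' -> R x y -> R x' y'.

Lemma meets_commute_of_forward (Phi Psi : PClass) :
  (forall X Y (leX : X -> X -> Prop) (leY : Y -> Y -> Prop), IsPoset X leX -> IsPoset Y leY ->
     forall phi psi, Phi {y | phi y} (sub_le leY phi) -> Psi {x | psi x} (sub_le leX psi) ->
     forall F : X -> Y -> bool, op_monotone leX leY (fun x y => F x y = true) ->
     (forall x, psi x -> exists y, phi y /\ F x y = true) ->
     exists y, phi y /\ forall x, psi x -> F x y = true) ->
  MeetsCommuteJoins Phi Psi.
Proof.
  intros forward X Y leX leY HX HY phi psi [_ Hphi] [_ Hpsi] F mono; split.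
  - apply (forward X Y leX leY); auto.
  - intros [y [phiy Hy]] x psix; exists y; auto.
Qed.

Lemma commute_directed_fincof X Y (leX : X -> X -> Prop) (leY : Y -> Y -> Prop)
  (phi : Y -> Prop) (psi : X -> Prop) (F : X -> Y -> bool) :
  IsPoset X leX -> IsPoset Y leY ->
  Directed {y | phi y} (sub_le leY phi) -> FiniteCofinality {x | psi x} (sub_le leX psi) ->
  op_monotone leX leY (fun x y => F x y = true) ->
  (forall x, psi x -> exists y, phi y /\ F x y = true) ->
  exists y, phi y /\ forall x, psi x -> F x y = true.
Proof.
  intros HX HY [[[y0 phiy0] _] dir] [ls cover] mono H.
  assert (bound : forall ls : list {x | psi x},
    exists y, phi y /\ forall s, In s ls -> F (proj1_sig s) y = true).
  { induction ls0 as [|[x psix] ls' [y2 [phiy2 H2]]].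
    - exists y0; split; [exact phiy0 | intros s []].
    - destruct (H x psix) as [y1 [phiy1 H1]].
      destruct (dir (exist _ y1 phiy1) (exist _ y2 phiy2)) as [[z phiz] [y1z y2z]].
      exists z; split; [exact phiz|]; intros s [<-|sls].
      + exact (mono _ _ _ _ (proj1 HX x) y1z H1).
      + exact (mono _ _ _ _ (proj1 HX _) y2z (H2 s sls)). }
  destruct (bound ls) as [y [phiy Hy]]; exists y; split; [exact phiy|].
  intros x psix; destruct (cover (exist _ x psix)) as [s [sls xs]].
  exact (mono _ _ _ _ xs (proj1 HY y) (Hy s sls)).
Qed.

Lemma commute_greatest X Y (leX : X -> X -> Prop) (leY : Y -> Y -> Prop)
  (phi : Y -> Prop) (psi : X -> Prop) (F : X -> Y -> bool) :
  IsPoset Y leY -> HasGreatest {x | psi x} (sub_le leX psi) ->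
  op_monotone leX leY (fun x y => F x y = true) ->
  (forall x, psi x -> exists y, phi y /\ F x y = true) ->
  exists y, phi y /\ forall x, psi x -> F x y = true.
Proof.
  intros HY [[g psig] top] mono H; destruct (H g psig) as [y [phiy gy]].
  exists y; split; [exact phiy|]; intros x psix.
  exact (mono _ _ _ _ (top (exist _ x psix)) (proj1 HY y) gy).
Qed.

Lemma generated_base (Phi Psi : PClass) X (le : X -> X -> Prop) (A : X -> Prop) :
  InClassOf Psi le A -> Generated Phi Psi le A.
Proof. intros HA C base _; exact (base A HA). Qed.

Lemma generated_union (Phi Psi : PClass) X (le : X -> X -> Prop) (S : (X -> Prop) -> Prop) :
  (forall A, S A -> lower le A /\ Generated Phi Psi le A) -> Phi {A | S A} (incl_le S) ->
  Generated Phi Psi le (bigunion S).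
Proof.
  intros HS HPhi C base unions; apply unions; auto.
  intros A SA; split; [exact (proj1 (HS A SA)) | apply (proj2 (HS A SA)); auto].
Qed.

Lemma down_incl {X : Type} (le : X -> X -> Prop) (l l' : list X) :
  (forall y, In y l -> In y l') -> forall x, down le l x -> down le l' x.
Proof. intros ll' x [y [yl xy]]; exists y; auto. Qed.

Lemma list_in_sub {X : Type} (P : X -> Prop) (l : list X) :
  (forall y, In y l -> P y) -> exists L : list {x | P x}, map (@proj1_sig _ _) L = l.
Proof.
  induction l as [|a l IH]; intro Hl; [exists []; reflexivity|].
  destruct IH as [L HL]; [intros y yl; apply Hl; right; exact yl|].
  exists (exist _ a (Hl a (or_introl eq_refl)) :: L); simpl; rewrite HL; reflexivity.
Qed.

Lemma down_fincof {X : Type} (le : X -> X -> Prop) (l : list X) :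
  IsPoset X le -> FiniteCofinality {x | down le l x} (sub_le le (down le l)).
Proof.
  intro HX; destruct (list_in_sub (down le l) l (fun y => down_in le l y HX)) as [L HL].
  exists L; intros [x Hx]; pose proof Hx as [y [yl xy]].
  rewrite <- HL in yl; apply in_map_iff in yl; destruct yl as [w [<- wL]].
  exists w; split; [exact wL | exact xy].
Qed.

Definition fin_down_family {X : Type} (le : X -> X -> Prop) (L : X -> Prop) (base : list X)
  : (X -> Prop) -> Prop :=
  fun A => exists l, (forall y, In y l -> L y) /\ A = down le (base ++ l).

Lemma fin_down_family_directed {X : Type} (le : X -> X -> Prop) (L : X -> Prop) base :
  Directed {A | fin_down_family le L base A} (incl_le (fin_down_family le L base)).
Proof.
  split.
  - assert (F0 : fin_down_family le L base (down le (base ++ [])))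
      by (exists []; split; [intros y [] | reflexivity]).
    exists (exist _ _ F0); auto.
  - intros [A [l1 [L1 ->]]] [B [l2 [L2 ->]]].
    assert (F12 : fin_down_family le L base (down le (base ++ l1 ++ l2))).
    { exists (l1 ++ l2); split; [|reflexivity].
      intros y; rewrite in_app_iff; intros [yl|yl]; auto. }
    exists (exist _ _ F12); unfold incl_le; simpl; split; apply down_incl;
      intro y; rewrite !in_app_iff; tauto.
Qed.

Lemma fin_down_family_union {X : Type} (le : X -> X -> Prop) (L : X -> Prop) base :
  IsPoset X le -> lower le L -> (forall y, In y base -> L y) ->
  bigunion (fin_down_family le L base) = L.
Proof.
  intros HX HL Hbase; apply pred_ext; intro x; split.
  - intros [A [[l [Hl ->]] [y [yin xy]]]]; apply (HL x y xy).
    apply in_app_iff in yin; destruct yin; auto.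
  - intro Lx; exists (down le (base ++ [x])); split.
    + exists [x]; split; [intros y [<-|[]]; exact Lx | reflexivity].
    + apply down_in; [exact HX | apply in_app_iff; right; left; reflexivity].
Qed.

Definition principal_family {X : Type} (le : X -> X -> Prop) (L : X -> Prop)
  : (X -> Prop) -> Prop :=
  fun A => exists x, L x /\ A = down le [x].

Lemma principal_family_union {X : Type} (le : X -> X -> Prop) (L : X -> Prop) :
  IsPoset X le -> lower le L -> bigunion (principal_family le L) = L.
Proof.
  intros HX HL; apply pred_ext; intro x; split.
  - intros [A [[z [Lz ->]] [y [[<-|[]] xy]]]]; exact (HL x z xy Lz).
  - intro Lx; exists (down le [x]); split; [exists x; auto | apply down_in; simpl; auto].
Qed.

Lemma nat_directed : Directed nat le.
Proof. split; [exists 0; auto | intros x y; exists (x + y); lia]. Qed.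

Lemma valid_directed_fincof :
  JoinDoctrine C_directed /\ JoinDoctrine C_fincof /\
  SoundDual C_directed C_fincof /\ C_directed nat le.
Proof.
  split; [exact jd_C_directed|]; split; [exact jd_C_fincof|]; split; [split|].
  - apply meets_commute_of_forward; intros X Y leX leY HX HY phi psi [_ dir] [_ fc] F.
    apply commute_directed_fincof; auto.
  - intros X le HX L HL.
    rewrite <- (fin_down_family_union le L [] HX HL) by (intros y []).
    apply generated_union.
    + intros A [l [_ ->]]; split; [apply down_lower, HX | apply generated_base].
      split; [apply down_lower, HX | split; [apply sub_poset, HX | apply down_fincof, HX]].
    + split; [apply incl_poset | apply fin_down_family_directed].
  - split; [exact nat_poset | exact nat_directed].
Qed.

Lemma valid_empty_or_directed_nonempty_fincof :
  JoinDoctrine C_empty_or_directed /\ JoinDoctrine C_nonempty_fincof /\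
  SoundDual C_empty_or_directed C_nonempty_fincof /\ C_empty_or_directed nat le.
Proof.
  split; [exact jd_C_empty_or_directed|]; split; [exact jd_C_nonempty_fincof|].
  split; [split|].
  - apply meets_commute_of_forward;
      intros X Y leX leY HX HY phi psi [_ Hphi] [_ [[[x0 psix0] _] fc]] F mono H.
    destruct Hphi as [empty | dir].
    + destruct (H x0 psix0) as [y [phiy _]].
      destruct empty; exists (exist _ y phiy); auto.
    + apply (commute_directed_fincof X Y leX leY); auto.
  - intros X le HX L HL; destruct (classic (exists x, L x)) as [[x0 Lx0] | empty].
    + rewrite <- (fin_down_family_union le L [x0] HX HL) by (intros y [<-|[]]; exact Lx0).
      apply generated_union.
      * intros A [l [_ ->]]; split; [apply down_lower, HX | apply generated_base].
        split; [apply down_lower, HX|]; split; [apply sub_poset, HX|].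
        split; [|apply down_fincof, HX].
        exists (exist _ x0 (down_in le ([x0] ++ l) x0 HX (or_introl eq_refl))); auto.
      * split; [apply incl_poset | right; apply fin_down_family_directed].
    + replace L with (bigunion (fun _ : X -> Prop => False)).
      * apply generated_union; [intros A []|].
        split; [apply incl_poset | left; intros [[A []] _]].
      * apply pred_ext; intro x; split; [intros [A [[] _]] | intro Lx].
        destruct (empty (ex_intro _ x Lx)).
  - split; [exact nat_poset | right; exact nat_directed].
Qed.

Lemma valid_nonempty_empty_or_greatest :
  JoinDoctrine C_nonempty /\ JoinDoctrine C_empty_or_greatest /\
  SoundDual C_nonempty C_empty_or_greatest /\ C_nonempty nat le.
Proof.
  split; [exact jd_C_nonempty|]; split; [exact jd_C_empty_or_greatest|]; split; [split|].
  - apply meets_commute_of_forward;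
      intros X Y leX leY HX HY phi psi [_ [[y phiy] _]] [_ [empty | top]] F mono H.
    + exists y; split; [exact phiy|]; intros x psix.
      destruct empty; exists (exist _ x psix); auto.
    + apply (commute_greatest X Y leX leY); auto.
  - intros X le HX L HL; destruct (classic (exists x, L x)) as [[x0 Lx0] | empty].
    + rewrite <- (principal_family_union le L HX HL); apply generated_union.
      * intros A [x [_ ->]]; split; [apply down_lower, HX | apply generated_base].
        split; [apply down_lower, HX|]; split; [apply sub_poset, HX|].
        right; apply down_single_greatest, HX.
      * split; [apply incl_poset|].
        exists (exist (principal_family le L) (down le [x0]) (ex_intro _ x0 (conj Lx0 eq_refl))).
        exact I.
    + apply generated_base; split; [exact HL|]; split; [apply sub_poset, HX|].
      left; intros [[x Lx] _]; apply empty; exists x; exact Lx.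
  - split; [exact nat_poset | exists 0; auto].
Qed.

Lemma valid_all_greatest :
  JoinDoctrine C_all /\ JoinDoctrine C_greatest /\ SoundDual C_all C_greatest /\ C_all nat le.
Proof.
  split; [exact jd_C_all|]; split; [exact jd_C_greatest|]; split; [split|].
  - apply meets_commute_of_forward; intros X Y leX leY HX HY phi psi _ [_ top] F.
    apply (commute_greatest X Y leX leY); auto.
  - intros X le HX L HL; rewrite <- (principal_family_union le L HX HL).
    apply generated_union; [|apply incl_poset].
    intros A [x [_ ->]]; split; [apply down_lower, HX | apply generated_base].
    split; [apply down_lower, HX|]; split; [apply sub_poset, HX|].
    apply down_single_greatest, HX.
  - exact nat_poset.
Qed.

(** * Classification *)

Section UpperBoundClosure.

Variables (D : Type) (leD : D -> D -> Prop) (ub : D -> D -> D).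
Hypothesis HD : IsPoset D leD.
Hypothesis ub_upper : forall x y, leD x (ub x y) /\ leD y (ub x y).

Inductive ub_closure (A : D -> Prop) : D -> Prop :=
  | ub_closure_base x : A x -> ub_closure A x
  | ub_closure_ub x y : ub_closure A x -> ub_closure A y -> ub_closure A (ub x y).

Lemma ub_closure_mono (A B : D -> Prop) :
  (forall x, A x -> B x) -> forall x, ub_closure A x -> ub_closure B x.
Proof. intros AB x; induction 1; [apply ub_closure_base | apply ub_closure_ub]; auto. Qed.

Fixpoint ub_level (l : list D) (n : nat) : list D :=
  match n with
  | 0 => l
  | S n => ub_level l n ++
           map (fun p => ub (fst p) (snd p)) (list_prod (ub_level l n) (ub_level l n))
  end.

Lemma ub_level_closure l n x : In x (ub_level l n) -> ub_closure (fun y => In y l) x.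
Proof.
  revert x; induction n as [|n IH]; simpl; intros x xin; [apply ub_closure_base, xin|].
  apply in_app_iff in xin; destruct xin as [xin | xin]; auto.
  apply in_map_iff in xin; destruct xin as [[y z] [<- yz]]; apply in_prod_iff in yz.
  apply ub_closure_ub; apply IH, yz.
Qed.

Lemma ub_level_mono l n m : n <= m -> forall x, In x (ub_level l n) -> In x (ub_level l m).
Proof. induction 1; auto; intros x xin; simpl; apply in_or_app; left; auto. Qed.

Lemma ub_closure_level l x : ub_closure (fun y => In y l) x -> exists n, In x (ub_level l n).
Proof.
  induction 1 as [x xl | x y _ [n xn] _ [m ym]]; [exists 0; exact xl|].
  exists (S (Nat.max n m)); simpl; apply in_or_app; right.
  apply in_map_iff; exists (x, y); split; [reflexivity|]; apply in_prod_iff.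
  split; [apply (ub_level_mono l n) | apply (ub_level_mono l m)]; auto; lia.
Qed.

Lemma fold_ub_upper d t :
  leD d (fold_right ub d t) /\ forall y, In y t -> leD y (fold_right ub d t).
Proof.
  pose proof HD as (refl & trans & _).
  induction t as [|x t [IHd IHt]]; simpl; [split; [apply refl | intros y []]|].
  split; [eapply trans; [exact IHd | apply ub_upper]|].
  intros y [<-|yt]; [apply ub_upper | eapply trans; [apply IHt, yt | apply ub_upper]].
Qed.

Lemma fold_ub_closure A d t :
  ub_closure A d -> (forall y, In y t -> ub_closure A y) -> ub_closure A (fold_right ub d t).
Proof.
  intros Ad At; induction t as [|x t IH]; simpl; auto.
  apply ub_closure_ub; [apply At; left | apply IH; intros; apply At; right]; auto.
Qed.

Fixpoint ub_chain (l : list D) (a : D) (n : nat) : D :=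
  match n with
  | 0 => a
  | S n => fold_right ub (ub_chain l a n) (ub_level l n)
  end.

Lemma jd_ub_closure_list (Phi : PClass) :
  JoinDoctrine Phi -> Phi nat le -> forall a l, In a l ->
  Phi {x | ub_closure (fun y => In y l) x} (sub_le leD (ub_closure (fun y => In y l))).
Proof.
  intros JPhi Hnat a l al.
  assert (chain_closure : forall n, ub_closure (fun y => In y l) (ub_chain l a n)).
  { induction n as [|n IH]; simpl; [apply ub_closure_base, al|].
    apply fold_ub_closure; [exact IH | apply ub_level_closure]. }
  apply (jd_cofinal_image Phi JPhi _ _ le _ (fun n => exist _ _ (chain_closure n))).
  - apply sub_poset, HD.
  - intros n m nm; unfold sub_le; simpl; induction nm as [|m nm IH]; [apply HD|].
    eapply HD; [exact IH | apply (proj1 (fold_ub_upper _ _))].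
  - intros [x xcl]; destruct (ub_closure_level l x xcl) as [n xn].
    exists (S n); unfold sub_le; simpl; apply fold_ub_upper, xn.
  - exact Hnat.
Qed.

End UpperBoundClosure.

Fixpoint greedy_prefix {Z : Type} (pick : list Z -> Z) (n : nat) : list Z :=
  match n with
  | 0 => []
  | S n => pick (greedy_prefix pick n) :: greedy_prefix pick n
  end.

Lemma fresh_sequence {Z : Type} (A : Z -> Prop) :
  (forall l : list Z, exists x, A x /\ ~ In x l) ->
  exists a : nat -> Z, (forall n, A (a n)) /\ forall m n, a m = a n -> m = n.
Proof.
  intro fresh; destruct (choice _ fresh) as [pick Hpick].
  exists (fun n => pick (greedy_prefix pick n)); split; [intro n; apply Hpick|].
  assert (earlier : forall m n, m < n -> In (pick (greedy_prefix pick m)) (greedy_prefix pick n)).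
  { intros m n; induction n as [|n IH]; intro mn; [lia|]; simpl.
    destruct (classic (m = n)) as [->|ne]; [left; reflexivity | right; apply IH; lia]. }
  intros m n e; destruct (PeanoNat.Nat.lt_trichotomy m n) as [mn | [mn | nm]]; auto.
  - destruct (proj2 (Hpick (greedy_prefix pick n))); rewrite <- e; apply earlier, mn.
  - destruct (proj2 (Hpick (greedy_prefix pick m))); rewrite e; apply earlier, nm.
Qed.

Section Classification.

Variables Phi Psi : PClass.
Hypotheses (JPhi : JoinDoctrine Phi) (JPsi : JoinDoctrine Psi).
Hypothesis commute : MeetsCommuteJoins Phi Psi.
Hypothesis generation :
  forall X (leX : X -> X -> Prop), IsPoset X leX ->
  forall L, lower leX L -> Generated Phi Psi leX L.

Lemma commute_total X Y (leX : X -> X -> Prop) (leY : Y -> Y -> Prop) (R : X -> Y -> Prop) :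
  Psi X leX -> Phi Y leY -> op_monotone leX leY R ->
  (forall x, exists y, R x y) -> exists y, forall x, R x y.
Proof.
  intros HX HY mono H.
  destruct (commute X Y leX leY (jd_poset Psi JPsi _ _ HX) (jd_poset Phi JPhi _ _ HY)
    (fun _ => True) (fun _ => True)) with (F := fun x y => truth (R x y)) as [forward _].
  - split; [intros y y' _ _; exact I | apply jd_total_sub; auto].
  - split; [intros x x' _ _; exact I | apply jd_total_sub; auto].
  - intros x x' y y' x'x yy'; rewrite !truth_spec; apply mono; auto.
  - destruct forward as [y [_ Hy]].
    + intros x _; destruct (H x) as [y Rxy]; exists y; split; [exact I | apply truth_spec, Rxy].
    + exists y; intro x; apply truth_spec, Hy, I.
Qed.

Lemma discrete_generation X (C : (X -> Prop) -> Prop) :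
  (forall A, Psi {x | A x} (sub_le eq A) -> C A) ->
  (forall S, (forall A, S A -> C A) -> Phi {A | S A} (incl_le S) -> C (bigunion S)) ->
  C (fun _ => True).
Proof.
  intros base unions; apply (generation X eq (eq_poset X)); [intros x y _ _; exact I | |].
  - intros A [_ HA]; apply base, HA.
  - intros S HS HPhi; apply unions; [intros A SA; apply HS, SA | exact HPhi].
Qed.

Lemma empty_not_in_both : ~ (Phi Empty_set eq /\ Psi Empty_set eq).
Proof.
  intros [HPhi HPsi].
  destruct (commute_total Empty_set Empty_set eq eq (fun _ _ => True) HPsi HPhi) as [[] _].
  - intros ? ? ? ? _ _ _; exact I.
  - intros [].
Qed.

Lemma empty_in_phi_or_psi : Phi Empty_set eq \/ Psi Empty_set eq.
Proof.
  apply (discrete_generation Empty_set (fun _ => Phi Empty_set eq \/ Psi Empty_set eq)).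
  - intros A HA; right.
    apply (jd_empty_iff Psi JPsi _ _ (sub_poset _ _ (eq_poset _))) in HA; [exact HA|].
    intros [[[] _] _].
  - intros S HS HPhi; destruct (classic (Nonempty {A | S A})) as [[[A SA] _] | empty].
    + exact (HS A SA).
    + left; apply (jd_empty_iff Phi JPhi _ _ (incl_poset S) empty), HPhi.
Qed.

(* If the Phi-family S of proper subsets of 2 covers 2, "contains true" is a
   monotone surjection from its nonempty members onto the discrete 2. *)
Lemma two_in_phi_or_psi : Phi bool eq \/ Psi bool eq.
Proof.
  apply NNPP; intro neither; apply not_or_and in neither; destruct neither as [notPhi notPsi].
  refine (discrete_generation bool (fun A => ~ (A true /\ A false)) _ _ (conj I I)).
  - intros A HA [At Af]; apply notPsi.
    apply (jd_cofinal_image Psi JPsi _ _ (sub_le eq A) _ (@proj1_sig _ A));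
      [apply eq_poset | | | exact HA].
    + intros x y xy; exact xy.
    + intros [|]; [exists (exist _ true At) | exists (exist _ false Af)]; reflexivity.
  - intros S HS HPhi [[A [SA At]] [B [SB Bf]]]; apply notPhi.
    set (ne := fun s : {A | S A} => exists b, proj1_sig s b).
    apply (jd_cofinal_image Phi JPhi _ _ (sub_le (incl_le S) ne) _
             (fun s => truth (proj1_sig (proj1_sig s) true))).
    + apply eq_poset.
    + intros [[C SC] [c Cc]] [[E SE] neE] CE; unfold sub_le, incl_le in CE; simpl.
      f_equal; apply propositional_extensionality; split; [apply CE|].
      intro Et; destruct c; [exact Cc|].
      destruct (HS E SE); split; [exact Et | apply CE, Cc].
    + intros [|].
      * exists (exist ne (exist _ A SA) (ex_intro _ true At)); simpl.
        symmetry; apply truth_spec, At.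
      * exists (exist ne (exist _ B SB) (ex_intro _ false Bf)); simpl.
        symmetry; apply not_true_is_false; rewrite truth_spec; intro Bt.
        apply (HS B SB); split; [exact Bt | exact Bf].
    + apply (jd_nonempty_members Phi JPhi); [exact HPhi|].
      exists A; split; [exact SA | exists true; exact At].
Qed.

Lemma upper_bound_in_phi_of_psi_two P (le : P -> P -> Prop) :
  Psi bool eq -> Phi P le -> forall x1 x2, exists z, le x1 z /\ le x2 z.
Proof.
  intros Htwo HP x1 x2; pose proof (jd_poset Phi JPhi _ _ HP) as (refl & trans & _).
  destruct (commute_total bool P eq le (fun b y => le (if b then x1 else x2) y) Htwo HP)
    as [z Hz].
  - intros b b' y y' <- yy' xby; eauto.
  - intros [|]; [exists x1 | exists x2]; apply refl.
  - exists z; split; [apply (Hz true) | apply (Hz false)].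
Qed.

Lemma upper_bound_in_psi_of_phi_two Q (le : Q -> Q -> Prop) :
  Phi bool eq -> Psi Q le -> forall x1 x2, exists z, le x1 z /\ le x2 z.
Proof.
  intros Htwo HQ x1 x2; pose proof (jd_poset Psi JPsi _ _ HQ) as (refl & trans & _).
  apply NNPP; intro none.
  destruct (commute_total Q bool le eq (fun x b => ~ le (if b then x1 else x2) x) HQ Htwo)
    as [b Hb].
  - intros x x' b b' x'x <- nbx bx'; apply nbx; eauto.
  - intro x; destruct (classic (le x1 x)) as [x1x | nx1x]; [exists false | exists true]; auto.
    intro x2x; apply none; exists x; auto.
  - destruct b; [apply (Hb x1) | apply (Hb x2)]; apply refl.
Qed.

Lemma phi_of_nonempty P (le : P -> P -> Prop) :
  Phi bool eq -> IsPoset P le -> Nonempty P -> Phi P le.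
Proof.
  intros Htwo HP [p0 _].
  apply (jd_of_total_sub Phi JPhi _ _ (fun _ => True) HP (fun _ => I)).
  refine (discrete_generation P (fun A => (exists x, A x) -> Phi {x | A x} (sub_le le A))
            _ _ (ex_intro _ p0 I)).
  - intros A HA [a Aa]; apply (jd_greatest Phi JPhi); [apply sub_poset, HP|].
    exists (exist _ a Aa); intros [x Ax].
    destruct (upper_bound_in_psi_of_phi_two _ _ Htwo HA (exist _ x Ax) (exist _ a Aa))
      as [z [xz az]].
    unfold sub_le in *; simpl in *; rewrite xz, <- az; apply HP.
  - intros S HS HPhi [x [A [SA Ax]]].
    apply (jd_sub_ext Phi _ _ (fun x => exists A, S A /\ (exists z, A z) /\ A x)).
    + intro y; split; [intros [B [SB [_ By]]] | intros [B [SB By]]]; exists B; eauto.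
    + apply jd_union_over_nonempty_members; eauto.
Qed.

Lemma psi_has_greatest Q (le : Q -> Q -> Prop) :
  Phi bool eq -> Psi Q le -> Nonempty Q -> HasGreatest Q le.
Proof.
  intros Htwo HQ ne; pose proof (jd_poset Psi JPsi _ _ HQ) as (refl & trans & anti).
  destruct (commute_total Q Q le le le HQ) as [g Hg].
  - apply phi_of_nonempty; [exact Htwo | split; auto | exact ne].
  - intros x x' y y' x'x yy' xy; eauto.
  - intro x; exists x; apply refl.
  - exists g; exact Hg.
Qed.

(* For an injective sequence a in A, "x differs from every a k with k >= n" holds
   for large n at each x in A, but for no n at all x. *)
Lemma psi_discrete_finite Z (A : Z -> Prop) :
  Phi nat le -> Psi {x | A x} (sub_le eq A) -> exists l, forall x, A x <-> In x l.
Proof.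
  intros Hnat HA.
  assert (cover : exists l, forall x, A x -> In x l).
  { apply NNPP; intro infinite.
    destruct (fresh_sequence A) as [a [Aa inj]].
    { intro l; apply NNPP; intro none; apply infinite; exists l; intros x Ax.
      apply NNPP; intro notin; apply none; exists x; auto. }
    destruct (commute_total {x | A x} nat (sub_le eq A) le
      (fun x n => forall k, n <= k -> proj1_sig x <> a k) HA Hnat) as [n Hn].
    - intros x x' n n' x'x nn' H k n'k; unfold sub_le in x'x; rewrite x'x; apply H; lia.
    - intros [x Ax]; destruct (classic (exists k, x = a k)) as [[k ->] | notseq].
      + exists (S k); intros k' kk' e; apply inj in e; lia.
      + exists 0; intros k _ e; apply notseq; exists k; exact e.
    - exact (Hn (exist _ (a n) (Aa n)) n (le_n n) eq_refl). }
  destruct cover as [l Hl]; exists (filter (fun x => truth (A x)) l); intro x.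
  rewrite filter_In, truth_spec; split; [intro Ax; split; auto | tauto].
Qed.

(* Closure under chosen upper bounds turns the finite generators into Phi-posets
   and commutes with the generating Phi-unions, whose index posets are directed. *)
Lemma phi_of_directed D (leD : D -> D -> Prop) :
  Psi bool eq -> Phi nat le -> IsPoset D leD -> Directed D leD -> Phi D leD.
Proof.
  intros Htwo Hnat HD [[d0 _] dir].
  destruct (choice (fun p z => leD (fst p) z /\ leD (snd p) z) (fun p => dir (fst p) (snd p)))
    as [ub' Hub'].
  set (ub := fun x y => ub' (x, y)).
  assert (Hub : forall x y, leD x (ub x y) /\ leD y (ub x y)) by (intros x y; apply (Hub' (x, y))).
  apply (jd_of_total_sub Phi JPhi _ _ (ub_closure D ub (fun _ => True)) HD).
  { intro x; apply ub_closure_base; exact I. }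
  refine (discrete_generation D
    (fun A => (exists x, A x) -> Phi {x | ub_closure D ub A x} (sub_le leD (ub_closure D ub A)))
    _ _ (ex_intro _ d0 I)).
  - intros A HA [a Aa]; destruct (psi_discrete_finite D A Hnat HA) as [l Hl].
    rewrite (pred_ext A (fun x => In x l) Hl).
    apply (jd_ub_closure_list D leD ub HD Hub Phi JPhi Hnat a), Hl, Aa.
  - intros S HS HPhi [x [A [SA Ax]]].
    apply (jd_sub_ext Phi _ _ (fun x => exists A, S A /\ (exists z, A z) /\ ub_closure D ub A x)).
    + intro y; split.
      * intros [B [SB [_ By]]]; apply (ub_closure_mono D ub B); [|exact By].
        intros z Bz; exists B; auto.
      * induction 1 as [y [B [SB By]] | y1 y2 _ [B1 [SB1 [[z1 B1z1] H1]]] _ [B2 [SB2 [_ H2]]]].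
        -- exists B; split; [exact SB | split; [exists y; exact By | apply ub_closure_base, By]].
        -- destruct (upper_bound_in_phi_of_psi_two _ _ Htwo HPhi (exist _ B1 SB1) (exist _ B2 SB2))
             as [[B3 SB3] [B13 B23]]; unfold incl_le in B13, B23; simpl in B13, B23.
           exists B3; split; [exact SB3 | split; [exists z1; apply B13, B1z1|]].
           apply ub_closure_ub; [exact (ub_closure_mono D ub B1 B3 B13 y1 H1)|].
           exact (ub_closure_mono D ub B2 B3 B23 y2 H2).
    + apply (jd_union_over_nonempty_members Phi JPhi); eauto using ub_closure_mono.
Qed.

Lemma psi_fincof Q (leQ : Q -> Q -> Prop) :
  Psi bool eq -> Phi nat le -> Psi Q leQ -> FiniteCofinality Q leQ.
Proof.
  intros Htwo Hnat HQ; pose proof (jd_poset Psi JPsi _ _ HQ) as HQp.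
  set (F := fin_down_family leQ (fun _ => True) []).
  destruct (commute_total Q {A | F A} leQ (incl_le F) (fun x s => proj1_sig s x) HQ)
    as [[A [l [lT ->]]] Hl].
  - apply phi_of_directed; [exact Htwo | exact Hnat | apply incl_poset |].
    apply fin_down_family_directed.
  - intros x x' [A [l [lT ->]]] s' x'x ss' Ax; apply ss'; simpl in *.
    exact (down_lower leQ l HQp x' x x'x Ax).
  - intro x; exists (exist F (down leQ [x]) (ex_intro _ [x] (conj (fun _ _ => I) eq_refl))).
    apply down_in; simpl; auto.
  - exists l; exact Hl.
Qed.

Lemma phi_nonempty_iff_of_phi_two T (leT : T -> T -> Prop) :
  Phi bool eq -> Nonempty T -> Phi T leT <-> IsPoset T leT.
Proof.
  intros Htwo ne; split; [apply (jd_poset Phi JPhi) | intro HT; apply phi_of_nonempty; auto].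
Qed.

Lemma psi_nonempty_iff_of_phi_two T (leT : T -> T -> Prop) :
  Phi bool eq -> Nonempty T -> Psi T leT <-> IsPoset T leT /\ HasGreatest T leT.
Proof.
  intros Htwo ne; split.
  - intro H; split; [exact (jd_poset Psi JPsi _ _ H) | apply psi_has_greatest; auto].
  - intros [HT top]; apply (jd_greatest Psi JPsi); auto.
Qed.

Lemma phi_nonempty_iff_of_psi_two T (leT : T -> T -> Prop) :
  Psi bool eq -> Phi nat le -> Nonempty T -> Phi T leT <-> IsPoset T leT /\ Directed T leT.
Proof.
  intros Htwo Hnat ne; split.
  - intro H; split; [exact (jd_poset Phi JPhi _ _ H)|].
    split; [exact ne | apply upper_bound_in_phi_of_psi_two; auto].
  - intros [HT dir]; apply phi_of_directed; auto.
Qed.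

Lemma psi_nonempty_iff_of_psi_two T (leT : T -> T -> Prop) :
  Psi bool eq -> Phi nat le -> Nonempty T ->
  Psi T leT <-> IsPoset T leT /\ FiniteCofinality T leT.
Proof.
  intros Htwo Hnat ne; split.
  - intro H; split; [exact (jd_poset Psi JPsi _ _ H) | apply psi_fincof; auto].
  - intros [HT fc]; apply (jd_nonempty_fincof_of_two Psi JPsi); auto.
Qed.

Lemma classification_of_phi_two :
  Phi bool eq ->
  (SameClass Phi C_nonempty /\ SameClass Psi C_empty_or_greatest) \/
  (SameClass Phi C_all /\ SameClass Psi C_greatest).
Proof.
  intro Htwo; pose proof empty_not_in_both as not_both; pose proof empty_in_phi_or_psi as one.
  destruct (classic (Phi Empty_set eq)) as [HE | HE]; [right | left]; split;
    apply sameclass_of_nonempty;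
    auto using jd_C_all, jd_C_greatest, jd_C_nonempty, jd_C_empty_or_greatest.
  - intros T leT ne; rewrite phi_nonempty_iff_of_phi_two by auto; reflexivity.
  - split; [intros _; apply eq_poset | auto].
  - intros T leT ne; rewrite psi_nonempty_iff_of_phi_two by auto; reflexivity.
  - split; [intro H; destruct (not_both (conj HE H)) | intros [_ [[] _]]].
  - intros T leT ne; rewrite phi_nonempty_iff_of_phi_two by auto; unfold C_nonempty; tauto.
  - split; [intro H; contradiction | intros [_ [[] _]]].
  - intros T leT ne; rewrite psi_nonempty_iff_of_phi_two by auto.
    unfold C_empty_or_greatest; split; [tauto | intros [HT [e | top]]; [contradiction | auto]].
  - split; [intros _; split; [apply eq_poset | left; apply empty_set_empty] | intros _; tauto].
Qed.

Lemma classification_of_psi_two :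
  Psi bool eq -> Phi nat le ->
  (SameClass Phi C_directed /\ SameClass Psi C_fincof) \/
  (SameClass Phi C_empty_or_directed /\ SameClass Psi C_nonempty_fincof).
Proof.
  intros Htwo Hnat; pose proof empty_not_in_both as not_both.
  pose proof empty_in_phi_or_psi as one.
  destruct (classic (Phi Empty_set eq)) as [HE | HE]; [right | left]; split;
    apply sameclass_of_nonempty;
    auto using jd_C_directed, jd_C_fincof, jd_C_empty_or_directed, jd_C_nonempty_fincof.
  - intros T leT ne; rewrite phi_nonempty_iff_of_psi_two by auto.
    unfold C_empty_or_directed; split; [tauto | intros [HT [e | dir]]; [contradiction | auto]].
  - split; [intros _; split; [apply eq_poset | left; apply empty_set_empty] | auto].
  - intros T leT ne; rewrite psi_nonempty_iff_of_psi_two by auto; unfold C_nonempty_fincof; tauto.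
  - split; [intro H; destruct (not_both (conj HE H)) | intros [_ [[[] _] _]]].
  - intros T leT ne; rewrite phi_nonempty_iff_of_psi_two by auto; reflexivity.
  - split; [intro H; contradiction | intros [_ [[[] _] _]]].
  - intros T leT ne; rewrite psi_nonempty_iff_of_psi_two by auto; reflexivity.
  - split; [intros _; split; [apply eq_poset | exists []; intros []] | intros _; tauto].
Qed.

End Classification.

Theorem theorem3p9 : forall Phi Psi : PClass,
  (JoinDoctrine Phi /\ JoinDoctrine Psi /\ SoundDual Phi Psi /\ Phi nat le) <->
  ((SameClass Phi C_directed /\ SameClass Psi C_fincof) \/
   (SameClass Phi C_empty_or_directed /\ SameClass Psi C_nonempty_fincof) \/
   (SameClass Phi C_nonempty /\ SameClass Psi C_empty_or_greatest) \/
   (SameClass Phi C_all /\ SameClass Psi C_greatest)).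
Proof.
  intros Phi Psi; split.
  - intros (JPhi & JPsi & [commute generation] & Hnat).
    destruct (two_in_phi_or_psi Phi Psi JPhi JPsi generation) as [Htwo | Htwo].
    + right; right; apply (classification_of_phi_two Phi Psi); auto.
    + destruct (classification_of_psi_two Phi Psi) as [H | H]; auto.
  - intros [[H1 H2]|[[H1 H2]|[[H1 H2]|[H1 H2]]]];
      rewrite (sameclass_eq _ _ H1), (sameclass_eq _ _ H2).
    + exact valid_directed_fincof.
    + exact valid_empty_or_directed_nonempty_fincof.
    + exact valid_nonempty_empty_or_greatest.
    + exact valid_all_greatest.
Qed.
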